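(* Under the standing assumptions below, for every $\theta\in\mathbb{R}^K$, $$(\theta^*-\theta)^T\bar g(\theta)=(1-\gamma)\|V_{\theta^*}-V_\theta\|_D^2+\gamma\|V_{\theta^*}-V_\theta\|_{\rm Dir}^2 .$$
   Context: Setting: finite state space $\mathcal S=[n]$, a fixed policy inducing an irreducible aperiodic transition matrix $P$ with unique stationary distribution $\pi$, bounded deterministic rewards, $r(s,s')=\sum_a\mu(s,a)r(s,a,s')$ ($\mu$ the policy), discount $\gamma\in(0,1)$. Features $\Phi\in\mathbb{R}^{n\times K}$ of full column rank with rows $\phi(s)^T$, $\|\phi(s)\|_2\le1$, $V_\theta=\Phi\theta$. Norms: $\|V\|_D^2=\sum_s\pi_sV(s)^2$; $\|V\|_{\rm Dir}^2=\frac12\sum_{s,s'}\pi_sP(s,s')(V(s')-V(s))^2$. Mean TD(0) direction $\bar g(\theta)=\sum_{s,s'}\pi_sP(s,s')\big(r(s,s')+\gamma\phi(s')^T\theta-\phi(s)^T\theta\big)\phi(s)$; $\theta^*$ is the unique vector with $\bar g(\theta^* )=0$. *)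

From HB Require Import structures.
From mathcomp Require Import all_boot all_order all_algebra.
From mathcomp Require Import reals.
Set Implicit Arguments. Unset Strict Implicit. Unset Printing Implicit Defensive.
Import Order.TTheory GRing.Theory Num.Theory.
Local Open Scope ring_scope.

Section Defs.
Variable R : realType.

Definition induced_P (n : nat) (A : finType) (mu : 'I_n -> A -> R)
  (p : 'I_n -> A -> 'I_n -> R) : 'M[R]_n :=
  \matrix_(s, s') \sum_(a : A) mu s a * p s a s'.

Definition induced_r (n : nat) (A : finType) (mu : 'I_n -> A -> R)
  (r : 'I_n -> A -> 'I_n -> R) (s s' : 'I_n) : R :=
  \sum_(a : A) mu s a * r s a s'.

Definition stochastic_mx (n : nat) (P : 'M[R]_n) : Prop :=
  (forall s s', 0 <= P s s') /\ (forall s, \sum_s' P s s' = 1).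

Definition distribution (n : nat) (pi : 'rV[R]_n) : Prop :=
  (forall s, 0 <= pi 0 s) /\ \sum_s pi 0 s = 1.

Definition stationary (n : nat) (P : 'M[R]_n) (pi : 'rV[R]_n) : Prop :=
  distribution pi /\ pi *m P = pi.

Definition irreducible (n : nat) (P : 'M[R]_n) : Prop :=
  forall s s', exists k : nat, 0 < (P ^+ k) s s'.

Definition aperiodic (n : nat) (P : 'M[R]_n) : Prop :=
  forall s, forall d : nat,
    (forall k : nat, (0 < k)%N -> 0 < (P ^+ k) s s -> (d %| k)%N) -> d = 1%N.

Definition Vtheta (n K : nat) (Phi : 'M[R]_(n, K)) (theta : 'cV[R]_K) : 'cV[R]_n :=
  Phi *m theta.

Definition normD2 (n : nat) (pi : 'rV[R]_n) (V : 'cV[R]_n) : R :=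
  \sum_s pi 0 s * V s 0 ^+ 2.

Definition normDir2 (n : nat) (pi : 'rV[R]_n) (P : 'M[R]_n) (V : 'cV[R]_n) : R :=
  2^-1 * \sum_s \sum_s' pi 0 s * P s s' * (V s' 0 - V s 0) ^+ 2.

Definition gbar (n K : nat) (pi : 'rV[R]_n) (P : 'M[R]_n) (rr : 'I_n -> 'I_n -> R)
  (gamma : R) (Phi : 'M[R]_(n, K)) (theta : 'cV[R]_K) : 'cV[R]_K :=
  \col_k \sum_s \sum_s' pi 0 s * P s s' *
     (rr s s' + gamma * (Phi *m theta) s' 0 - (Phi *m theta) s 0) * Phi s k.

Definition dotK (K : nat) (u v : 'cV[R]_K) : R := \sum_k u k 0 * v k 0.

End Defs.

From HB Require Import structures.
From mathcomp Require Import all_boot all_order all_algebra.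
From mathcomp Require Import reals.
From mathcomp Require Import ring.
Set Implicit Arguments. Unset Strict Implicit. Unset Printing Implicit Defensive.
Import Order.TTheory GRing.Theory Num.Theory.
Local Open Scope ring_scope.

(* Write V := V_theta_star - V_theta and c(s,s') := pi_s P(s,s')
   for the stationary edge weights.  Three facts combine:
   - (TD difference) gbar is affine in theta, so
       gbar(theta) = gbar(theta) - gbar(theta_star)
                   = sum_{s,s'} c(s,s') (V(s) - gamma V(s')) phi(s);
   - (pairing) dotting a combination sum_s w_s phi(s) with theta_star - theta
     gives sum_s w_s V(s), because phi(s)^T (theta_star - theta) = V(s);
   - (Dirichlet identity) when the rows of P sum to one and pi P = pi, both
     marginals of c are pi, so sum c V(s)^2 = sum c V(s')^2 = ||V||_D^2, hence
       ||V||_Dir^2 = ||V||_D^2 - sum c V(s) V(s')  and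
       sum c (V(s) - gamma V(s')) V(s) = (1-gamma)||V||_D^2 + gamma||V||_Dir^2. *)

Section StationaryQuadraticForms.
Variables (R : realType) (n : nat) (P : 'M[R]_n) (pi : 'rV[R]_n).
Hypothesis P_rows : forall s, \sum_s' P s s' = 1.
Hypothesis pi_stationary : pi *m P = pi.

(* The first marginal of the edge weights pi_s P(s,s') is pi (rows sum to 1). *)
Lemma normD2_source (V : 'cV[R]_n) :
  normD2 pi V = \sum_s \sum_s' pi 0 s * P s s' * V s 0 ^+ 2.
Proof.
rewrite /normD2; apply: eq_bigr => s _.
by rewrite -mulr_suml -mulr_sumr P_rows mulr1.
Qed.

(* The second marginal of the edge weights is pi as well (stationarity). *)
Lemma normD2_target (V : 'cV[R]_n) :
  normD2 pi V = \sum_s \sum_s' pi 0 s * P s s' * V s' 0 ^+ 2.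
Proof.
rewrite exchange_big /normD2; apply: eq_bigr => s' _.
have pi_s' : \sum_s pi 0 s * P s s' = pi 0 s'.
  by have := congr1 (fun M : 'rV[R]_n => M 0 s') pi_stationary; rewrite mxE.
by rewrite -mulr_suml pi_s'.
Qed.

Lemma normDir2_autocorrelation (V : 'cV[R]_n) :
  normDir2 pi P V =
  normD2 pi V - \sum_s \sum_s' pi 0 s * P s s' * (V s 0 * V s' 0).
Proof.
have split2 : normD2 pi V = 2^-1 * (normD2 pi V + normD2 pi V).
  by field.
rewrite /normDir2 [in RHS]split2 {1}normD2_source normD2_target.
rewrite -big_split mulr_sumr [in RHS]mulr_sumr -sumrB; apply: eq_bigr => s _.
rewrite -big_split mulr_sumr [in RHS]mulr_sumr -sumrB; apply: eq_bigr => s' _ /=.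
by field.
Qed.

Lemma td_dirichlet_identity (gamma : R) (V : 'cV[R]_n) :
  \sum_s (\sum_s' pi 0 s * P s s' * (V s 0 - gamma * V s' 0)) * V s 0 =
  (1 - gamma) * normD2 pi V + gamma * normDir2 pi P V.
Proof.
rewrite normDir2_autocorrelation normD2_source.
rewrite mulrBr addrA -mulrDl subrK mul1r mulr_sumr -sumrB.
apply: eq_bigr => s _; rewrite mulr_suml mulr_sumr -sumrB.
apply: eq_bigr => s' _; ring.
Qed.

End StationaryQuadraticForms.

Lemma induced_P_rows (R : realType) (n : nat) (A : finType)
  (mu : 'I_n -> A -> R) (p : 'I_n -> A -> 'I_n -> R) :
  (forall s, \sum_a mu s a = 1) -> (forall s a, \sum_s' p s a s' = 1) ->
  forall s, \sum_s' induced_P mu p s s' = 1.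
Proof.
move=> mu1 p1 s; under eq_bigr => s' _ do rewrite mxE.
rewrite exchange_big -(mu1 s); apply: eq_bigr => a _.
by rewrite -mulr_sumr p1 mulr1.
Qed.

(* gbar is affine in theta: the rewards cancel in a difference, leaving the
   linear TD operator applied to the difference of value functions. *)
Lemma gbar_sub (R : realType) (n K : nat) (pi : 'rV[R]_n) (P : 'M[R]_n)
  (rr : 'I_n -> 'I_n -> R) (gamma : R) (Phi : 'M[R]_(n, K))
  (theta1 theta2 : 'cV[R]_K) :
  let V := Vtheta Phi theta1 - Vtheta Phi theta2 in
  gbar pi P rr gamma Phi theta2 - gbar pi P rr gamma Phi theta1 =
  \col_k \sum_s (\sum_s' pi 0 s * P s s' * (V s 0 - gamma * V s' 0)) * Phi s k.
Proof.
apply/matrixP => k j; rewrite !mxE -sumrB; apply: eq_bigr => s _.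
rewrite -sumrB mulr_suml; apply: eq_bigr => s' _.
rewrite !mxE; ring.
Qed.

Lemma dotK_feature_combination (R : realType) (n K : nat)
  (Phi : 'M[R]_(n, K)) (w : 'I_n -> R) (theta : 'cV[R]_K) :
  dotK theta (\col_k \sum_s w s * Phi s k) = \sum_s w s * (Phi *m theta) s 0.
Proof.
rewrite /dotK; under eq_bigr => k _ do rewrite mxE mulr_sumr.
rewrite exchange_big /=.
apply: eq_bigr => s _; rewrite mxE mulr_sumr; apply: eq_bigr => k _; ring.
Qed.

Theorem corollary1 (R : realType) (n K : nat) (A : finType)
  (mu : 'I_n -> A -> R) (p : 'I_n -> A -> 'I_n -> R)
  (r : 'I_n -> A -> 'I_n -> R) (gamma : R) (Phi : 'M[R]_(n, K))
  (pi : 'rV[R]_n) (theta_star : 'cV[R]_K) :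
  (* policy: a probability distribution over actions in each state *)
  (forall s a, 0 <= mu s a) -> (forall s, \sum_a mu s a = 1) ->
  (* MDP transition kernel *)
  (forall s a s', 0 <= p s a s') -> (forall s a, \sum_s' p s a s' = 1) ->
  (* induced chain irreducible and aperiodic *)
  irreducible (induced_P mu p) -> aperiodic (induced_P mu p) ->
  (* pi: the unique stationary distribution *)
  stationary (induced_P mu p) pi ->
  (forall pi', stationary (induced_P mu p) pi' -> pi' = pi) ->
  (* bounded rewards *)
  (exists B : R, forall s a s', `|r s a s'| <= B) ->
  0 < gamma < 1 ->
  (* features: full column rank, rows of norm <= 1 *)
  \rank Phi = K ->
  (forall s, \sum_k Phi s k ^+ 2 <= 1) ->
  (* theta_star: the unique zero of gbar *)
  gbar pi (induced_P mu p) (induced_r mu r) gamma Phi theta_star = 0 ->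
  (forall th, gbar pi (induced_P mu p) (induced_r mu r) gamma Phi th = 0 ->
     th = theta_star) ->
  forall theta : 'cV[R]_K,
    dotK (theta_star - theta) (gbar pi (induced_P mu p) (induced_r mu r) gamma Phi theta)
    = (1 - gamma) * normD2 pi (Vtheta Phi theta_star - Vtheta Phi theta)
      + gamma * normDir2 pi (induced_P mu p) (Vtheta Phi theta_star - Vtheta Phi theta).
Proof.
move=> _ mu1 _ p1 _ _ [_ pi_stat] _ _ _ _ _ gbar_star _ theta.
rewrite -[X in dotK _ X]subr0 -[X in dotK _ (_ - X)]gbar_star gbar_sub.
rewrite dotK_feature_combination /Vtheta mulmxBr.
exact: td_dirichlet_identity (induced_P_rows mu1 p1) pi_stat _ _.
Qed.
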